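(* Let $\lambda\in(0,\tfrac12)$ and let $G$ be a finite simple connected graph with $n$ vertices. Then $$mt^{e}_{\lambda}(G)\le (n-1)\lambda,$$ and equality holds when $G$ is the complete graph $K_n$ (at any of its vertices).
   Context: $d(u,v)$ denotes graph distance. For a vertex $u$ of $G=(V,E)$, $t^{e}_{\lambda}(u)=\sum_{v\in V\setminus\{u\}} d(u,v)\lambda^{d(u,v)}$, and $mt^{e}_{\lambda}(G)=\min\{t^{e}_{\lambda}(u):u\in V\}$. *)

From HB Require Import structures.
From mathcomp Require Import all_boot all_order all_algebra.
Set Implicit Arguments. Unset Strict Implicit. Unset Printing Implicit Defensive.
Import Order.TTheory GRing.Theory Num.Theory.

Definition simple_graph (T : finType) (e : rel T) : Prop :=
  symmetric e /\ irreflexive e.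

Definition connected_graph (T : finType) (e : rel T) : Prop :=
  forall u v : T, connect e u v.

Definition complete_graph (T : finType) (e : rel T) : Prop :=
  forall u v : T, u != v -> e u v.

Definition walk_of_len (T : finType) (e : rel T) (u v : T) (k : nat) : bool :=
  [exists p : k.-tuple T, path e u p && (last u p == v)].

(* graph distance d(u,v): the least length of a walk from u to v
   (searched among 0..#|T|-1, which suffices for connected graphs). *)
Definition gdist (T : finType) (e : rel T) (u v : T) : nat :=
  find (walk_of_len e u v) (iota 0 #|T|).

Local Open Scope ring_scope.

Definition te (R : realFieldType) (T : finType) (e : rel T) (lam : R) (u : T) : R :=
  \sum_(v : T | v != u) (gdist e u v)%:R * lam ^+ (gdist e u v).

(* mt^e_lambda(G) = min_u t^e_lambda(u); u0 is any vertex (used only as seed). *)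
Definition mte (R : realFieldType) (T : finType) (e : rel T) (lam : R) (u0 : T) : R :=
  \big[Order.min/te e lam u0]_(u : T) te e lam u.

From mathcomp Require Import all_boot all_order all_algebra.
From mathcomp Require Import lra.
Import Order.TTheory GRing.Theory Num.Theory.
Local Open Scope ring_scope.

(* For 0 < lam < 1/2 every term d lam^d of t^e_lam(u) is at most lam, with
   equality exactly when d = 1; so t^e_lam(u) <= (n - 1) lam at every vertex,
   with equality at every vertex of K_n. *)

Lemma natrS_mul_expr_le1 (R : realFieldType) (lam : R) (k : nat) :
  0 <= lam -> lam <= 1 / 2 -> k.+1%:R * lam ^+ k <= 1.
Proof.
(* (k + 2) lam^(k+1) <= 2 lam (k + 1) lam^k <= 2 lam <= 1 *)
move=> lam_ge0 lam_le_half.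
elim: k => [|k IHk]; first by rewrite mul1r expr0.
have lam_k_ge0 : 0 <= lam ^+ k by rewrite exprn_ge0.
have k2_le : k.+2%:R <= 2 * k.+1%:R :> R.
  by rewrite -natrM ler_nat mul2n -addnn addnS ltnS leq_addr.
have le2 : k.+2%:R * lam ^+ k <= 2.
  rewrite -[2 in X in _ <= X]mulr1 (le_trans _ (ler_wpM2l _ IHk)) //.
  by rewrite mulrA ler_wpM2r.
have lam2_le1 : lam * 2 <= 1 by lra.
by rewrite exprS mulrCA (le_trans (ler_wpM2l lam_ge0 le2)).
Qed.

Lemma natr_mul_expr_le (R : realFieldType) (lam : R) (k : nat) :
  0 <= lam -> lam <= 1 / 2 -> k%:R * lam ^+ k <= lam.
Proof.
move=> lam_ge0 lam_le_half; case: k => [|k]; first by rewrite mul0r.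
by rewrite exprS mulrCA ler_piMr ?natrS_mul_expr_le1 // mulr_ge0 ?exprn_ge0.
Qed.

Lemma sumr_neq_const {T : finType} (u : T) {R : pzSemiRingType} (c : R) :
  \sum_(v : T | v != u) c = (#|T| - 1)%:R * c.
Proof. by rewrite sumr_const cardC1 subn1 mulr_natl. Qed.

Lemma te_le {R : realFieldType} {T : finType} (e : rel T) (lam : R) (u : T) :
  0 <= lam -> lam <= 1 / 2 -> te e lam u <= (#|T| - 1)%:R * lam.
Proof.
move=> lam_ge0 lam_le_half; rewrite -(sumr_neq_const u).
by apply: ler_sum => v _; apply: natr_mul_expr_le.
Qed.

Lemma gdist_complete {T : finType} (e : rel T) (u v : T) :
  complete_graph e -> u != v -> gdist e u v = 1%N.
Proof.
move=> e_complete uv.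
have : (1 < #|T|)%N by rewrite (cardD1 u) (cardD1 v) !inE eq_sym uv.
rewrite /gdist /walk_of_len; case: #|T| => [|[|n]] //= _.
have no_walk0 : [exists p : 0.-tuple T, path e u p && (last u p == v)] = false.
  by apply/negbTE/existsPn => p; rewrite tuple0 /= (negbTE uv).
have walk1 : [exists p : 1.-tuple T, path e u p && (last u p == v)].
  by apply/existsP; exists [tuple v]; rewrite /= e_complete // eqxx.
by rewrite no_walk0 walk1.
Qed.

Lemma te_complete {R : realFieldType} {T : finType} (e : rel T) (lam : R) (u : T) :
  complete_graph e -> te e lam u = (#|T| - 1)%:R * lam.
Proof.
move=> e_complete; rewrite -(sumr_neq_const u); apply: eq_bigr => v vu.
by rewrite gdist_complete 1?eq_sym // mul1r expr1.
Qed.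

Lemma mte_le_te {R : realFieldType} {T : finType} (e : rel T) (lam : R) (u0 : T) :
  mte e lam u0 <= te e lam u0.
Proof. exact: bigmin_le_id. Qed.

Lemma mte_te_const {R : realFieldType} {T : finType} (e : rel T) (lam c : R) (u0 : T) :
  (forall u, te e lam u = c) -> mte e lam u0 = c.
Proof.
move=> te_c; rewrite /mte; under eq_bigr do rewrite te_c.
by rewrite te_c bigmin_eq_id.
Qed.

Theorem theorem4 (R : realFieldType) (T : finType) (e : rel T) (lam : R) (u0 : T) :
  simple_graph e -> connected_graph e -> 0 < lam -> lam < 1 / 2 ->
  mte e lam u0 <= (#|T| - 1)%:R * lam /\
  (complete_graph e ->
     mte e lam u0 = (#|T| - 1)%:R * lam /\
     forall u : T, te e lam u = (#|T| - 1)%:R * lam).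
Proof.
move=> _ _ /ltW lam_ge0 /ltW lam_le_half; split.
  apply: le_trans (mte_le_te e lam u0) _; exact: te_le.
move=> e_complete; have te_n1 u := te_complete e lam u e_complete.
by split; first exact: mte_te_const.
Qed.
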